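(* Let $1\le k\le n$, let $a_\rho$ ($\rho\in\Sigma(k,n)$) be real numbers and let $\lambda_0,\dots,\lambda_n\ge0$ be real numbers. Define the symmetric matrix $M=(m_{\rho\tilde\rho})_{\rho,\tilde\rho\in\Sigma(k,n)}$ by $$m_{\rho\tilde\rho}=\begin{cases}\lambda_{\rho^*}\big(\lambda_0+\sum_{i=1}^k\lambda_{\rho(i)}\big)&\text{if }\rho=\tilde\rho,\\ (-1)^{s+t}\,\lambda_{\rho^*}\lambda_{\rho(s)}&\text{if }\mathcal R(\rho)\cap\mathcal R(\tilde\rho^* )=\{\rho(s)\},\ \mathcal R(\rho^* )\cap\mathcal R(\tilde\rho)=\{\tilde\rho(t)\},\\ 0&\text{otherwise.}\end{cases}$$ Then $$\sum_{\rho,\tilde\rho\in\Sigma(k,n)}a_\rho a_{\tilde\rho}m_{\rho\tilde\rho}=\lambda_0\sum_{\rho\in\Sigma(k,n)}a_\rho^2\lambda_{\rho^*}+\langle\theta,\theta\rangle_{\mathrm{Alt}^{n-k+1}\mathbb{R}^n},\qquad \theta=\sum_{\rho\in\Sigma(k,n)}(-1)^{\sigma(\rho)}a_\rho\sum_{i=1}^k\sqrt{\lambda_{\rho^*}\lambda_{\rho(i)}}\;\mu'_{\rho^*}\wedge\mu'_{\rho(i)}.$$ In particular the left-hand side is nonnegative.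
   Context: $\Sigma(k,n)$ is the set of strictly increasing maps $\{1,\dots,k\}\to\{1,\dots,n\}$; for $\rho\in\Sigma(k,n)$, $\rho^*$ is the increasing map with range $\{1,\dots,n\}\setminus\mathcal R(\rho)$; $s,t\in\{1,\dots,k\}$. For a set $S$ of indices, $\lambda_S=\prod_{i\in S}\lambda_i$, and $\lambda_{\rho^*}=\lambda_{\mathcal R(\rho^* )}$. $\sigma(\rho)$ is the number of inversions of the sequence $\rho(1),\dots,\rho(k),\rho^*(1),\dots,\rho^*(n-k)$. $\mu_1,\dots,\mu_n$ is an orthonormal basis of $\mathbb{R}^n$, $\mu'_1,\dots,\mu'_n$ its dual basis, $\mu'_{\rho^*}=\mu'_{\rho^*(1)}\wedge\cdots\wedge\mu'_{\rho^*(n-k)}$, and the inner product on $\mathrm{Alt}^m\mathbb{R}^n$ is $\langle\omega,\eta\rangle=\sum_{\tau}\omega(\mu_{\tau(1)},\dots,\mu_{\tau(m)})\,\eta(\mu_{\tau(1)},\dots,\mu_{\tau(m)})$, summed over strictly increasing $\tau:\{1,\dots,m\}\to\{1,\dots,n\}$. *)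

From HB Require Import structures.
From mathcomp Require Import all_boot all_order all_algebra.
Set Implicit Arguments. Unset Strict Implicit. Unset Printing Implicit Defensive.
Import Order.TTheory GRing.Theory Num.Theory.
Local Open Scope ring_scope.

(* Indices are 0-based: position s : 'I_k stands for s+1, and j : 'I_n
   stands for the index j+1 in {1,...,n}. *)

Definition incrb k n (f : {ffun 'I_k -> 'I_n}) : bool :=
  [forall i : 'I_k, forall j : 'I_k, (i < j)%N ==> (f i < f j)%N].

Definition Sigma k n := {f : {ffun 'I_k -> 'I_n} | incrb f}.

Definition rng k n (r : Sigma k n) : {set 'I_n} := [set val r i | i : 'I_k].

(* rho^* as the increasing sequence rho^*(1), ..., rho^*(n-k) *)
Definition rstar k n (r : Sigma k n) : seq 'I_n := enum (~: rng r).

Definition lamS (R : comNzRingType) n (lam : 'I_n -> R) (S : {set 'I_n}) : R :=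
  \prod_(j in S) lam j.

Definition lamstar (R : comNzRingType) k n (lam : 'I_n -> R) (r : Sigma k n) : R :=
  lamS lam (~: rng r).

Definition inversions (s : seq nat) : nat :=
  (\sum_(i < size s) \sum_(j < size s | (i < j)%N) (nth 0 s j < nth 0 s i))%N.

Definition sigma k n (r : Sigma k n) : nat :=
  inversions (map (@nat_of_ord n) (map (val r) (enum 'I_k) ++ rstar r)).

Definition mentry (R : comNzRingType) k n (lam0 : R) (lam : 'I_n -> R)
    (r rt : Sigma k n) : R :=
  if r == rt then lamstar lam r * (lam0 + \sum_(i < k) lam (val r i))
  else match [pick st : 'I_k * 'I_k |
                (rng r :&: ~: rng rt == [set val r st.1])
                && (~: rng r :&: rng rt == [set val rt st.2])] with
       | Some st => (-1) ^+ (st.1 + st.2)%N * lamstar lam r * lam (val r st.1)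
       | None => 0
       end.

(* dual basis mu'_i of the basis given by the rows mu_i = row i B of B *)
Definition dualb (R : fieldType) n (B : 'M[R]_n) (i : 'I_n) : 'rV[R]_n -> R :=
  fun v => (v *m invmx B) 0 i.

(* alternating m-forms on R^n, as functions of m vectors *)
Definition altform (R : nzRingType) n m := ('I_m -> 'rV[R]_n) -> R.

Definition wedge (R : comNzRingType) n m (fs : seq ('rV[R]_n -> R)) : altform R n m :=
  fun v => \det (\matrix_(a < m, b < m) (nth (fun _ => 0) fs a) (v b)).

Definition altdot (R : comNzRingType) n m (B : 'M[R]_n) (w e : altform R n m) : R :=
  \sum_(t : Sigma m n) w (fun b => row (val t b) B) * e (fun b => row (val t b) B).

Definition theta (R : rcfType) k n (B : 'M[R]_n) (lam : 'I_n -> R)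
    (a : Sigma k n -> R) : altform R n (n - k + 1)%N :=
  fun v => \sum_(r : Sigma k n) (-1) ^+ sigma r * a r *
     \sum_(i < k) Num.sqrt (lamstar lam r * lam (val r i)) *
        @wedge _ n (n - k + 1)%N (map (dualb B) (rcons (rstar r) (val r i))) v.

From HB Require Import structures.
From mathcomp Require Import all_boot all_order all_algebra zify ring.
Set Implicit Arguments. Unset Strict Implicit. Unset Printing Implicit Defensive.
Import Order.TTheory GRing.Theory Num.Theory.

(* Write D(rho, i) = R(rho) \ {rho(i)}.  On the basis vectors mu_tau the form
   mu'_{rho^*} /\ mu'_{rho(i)} is the determinant of a 0/1 incidence matrix: it is
   zero unless R(tau) is the complement of D(rho, i), and otherwise it is the sign
   of the permutation sorting rho^* followed by rho(i).  Multiplied by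
   (-1)^sigma(rho) this sign becomes (-1)^i times a quantity depending only on
   D(rho, i), so with c_(rho,i) = a_rho sqrt(lambda_{rho^*} lambda_{rho(i)}),
     <theta, theta> = sum c_(rho,i) c_(rho~,j) (-1)^(i+j) [D(rho, i) = D(rho~, j)].
   The pairs with D(rho, i) = D(rho~, j) are the diagonal ones (rho = rho~, i = j),
   giving lambda_{rho^*} sum_i lambda_{rho(i)}, and those where rho~ arises from rho
   by exchanging rho(i) for rho~(j), which are exactly the off-diagonal entries of M;
   in both cases the product of square roots is lambda over the complement of D. *)

Lemma inversions_cons (x : nat) (s : seq nat) :
  inversions (x :: s) = count (fun y => y < x) s + inversions s.
Proof.
rewrite /inversions /= big_ord_recl /=; congr (_ + _).
  rewrite big_mkcond /= big_ord_recl /= -sum1_count /=.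
  rewrite add0n (big_nth 0) big_mkord [RHS]big_mkcond; apply: eq_bigr => j _.
  by rewrite add0n; case: (_ < _).
apply: eq_bigr => i _; rewrite big_mkcond big_ord_recl /= add0n.
rewrite [RHS]big_mkcond /=; apply: eq_bigr => j _.
by rewrite /bump /= !add1n ltnS.
Qed.

Lemma inversions_cat (s1 s2 : seq nat) :
  inversions (s1 ++ s2) =
  inversions s1 + inversions s2 + \sum_(x <- s1) count (fun y => y < x) s2.
Proof.
elim: s1 => [|x s1 IH] /=; first by rewrite big_nil /inversions /= big_ord0 addn0.
by rewrite !inversions_cons IH big_cons count_cat; lia.
Qed.

Lemma inversions_sorted (s : seq nat) : sorted ltn s -> inversions s = 0.
Proof.
elim: s => [|x s IH] /= s_sorted; first by rewrite /inversions big_ord0.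
rewrite inversions_cons IH ?(path_sorted s_sorted) // addn0.
apply/eqP; rewrite -leqn0 leqNgt -has_count; apply/hasPn => y y_s.
by have /allP/(_ y y_s) /= := order_path_min ltn_trans s_sorted; rewrite -leqNgt => /ltnW.
Qed.

Lemma sorted_enum_ord n : sorted <%O (enum 'I_n).
Proof. by rewrite -(@sorted_map _ _ val) val_enum_ord iota_ltn_sorted. Qed.

Lemma sorted_enum_set n (A : {set 'I_n}) : sorted <%O (enum A).
Proof. by rewrite /enum_mem -enumT (sorted_filter lt_trans) ?sorted_enum_ord. Qed.

Lemma count_enum_ord_ge N p :
  p <= N -> count (fun i : 'I_N => p <= i) (enum 'I_N) = N - p.
Proof.
move=> le_pN; rewrite -(count_map val (leq p)) val_enum_ord -{1}(subnKC le_pN).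
rewrite iotaD count_cat (eq_in_count (a2 := pred0)) ?count_pred0; last first.
  by move=> x; rewrite mem_iota /= => /ltn_geF.
rewrite add0n (eq_in_count (a2 := predT)) ?count_predT ?size_iota // => x.
by rewrite mem_iota => /andP[].
Qed.

Lemma big_setC_setD1 (R : Type) (idx : R) (op : Monoid.com_law idx) (T : finType)
    (A : {set T}) (x : T) (F : T -> R) :
  x \in A -> \big[op/idx]_(y in ~: (A :\ x)) F y = op (F x) (\big[op/idx]_(y in ~: A) F y).
Proof. by move=> A_x; rewrite setCD setUC big_setU1 // inE negbK. Qed.

Lemma count_enum_set (T : finType) (A : {set T}) (P : pred T) :
  count P (enum A) = \sum_(y in A) P y.
Proof. by rewrite -sumn_count sumnE big_map big_enum. Qed.

Lemma sum_ord_gt k (i : 'I_k) : \sum_(j < k) (i < j) = k - i.+1.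
Proof. by rewrite -(count_enum_ord_ge (ltn_ord i)) -sumn_count sumnE big_map big_enum. Qed.

Lemma setU1I_setCU1 (T : finType) (x y : T) (D : {set T}) :
  x \notin D -> y \notin D -> x != y -> (x |: D) :&: ~: (y |: D) = [set x].
Proof.
move=> xD yD ne_xy; apply/setP => z; rewrite !inE.
case: (eqVneq z x) => [->|_] /=; first by rewrite (negbTE xD) (negbTE ne_xy).
by case: (eqVneq z y) => [->|_] /=; rewrite ?(negbTE yD) ?andbN.
Qed.

Lemma setD1_exchange (T : finType) (A B : {set T}) (x y : T) :
  A :&: ~: B = [set x] -> ~: A :&: B = [set y] -> A :\ x = B :\ y.
Proof.
move=> AB BA; apply/setP => z; move/setP/(_ z): AB; move/setP/(_ z): BA; rewrite !inE.
by case: (z \in A); case: (z \in B) => /= <- <-.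
Qed.

Lemma ltn_lift N (p : 'I_N.+1) (b : 'I_N) : (p < lift p b) = (p <= b).
Proof.
rewrite /= /bump; case: (leqP p b) => [le_pb|lt_bp]; first by rewrite add1n ltnS.
by apply/negbTE; rewrite -leqNgt ltnW.
Qed.

Lemma lift_incr N (p : 'I_N.+1) : {homo lift p : a b / a < b}.
Proof. by move=> a b; rewrite /= !ltnNge leq_bump2. Qed.

Section IncreasingMaps.
Variables m n : nat.
Implicit Types (r t : Sigma m n).

Lemma Sigma_incr r : {homo val r : i j / i < j}.
Proof. by move=> i j lt_ij; have /forallP/(_ i)/forallP/(_ j)/implyP := valP r; apply. Qed.

Lemma Sigma_ltn r : {mono val r : i j / i < j}.
Proof. exact/leW_mono/le_mono/Sigma_incr. Qed.

Lemma Sigma_inj r : injective (val r).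
Proof. exact/inc_inj/le_mono/Sigma_incr. Qed.

Lemma card_rng r : #|rng r| = m.
Proof. by rewrite card_imset ?card_ord //; apply: Sigma_inj. Qed.

Lemma mem_rng r i : val r i \in rng r.
Proof. exact: imset_f. Qed.

Lemma rngE r : rng r =i codom (val r).
Proof. by move=> x; apply/imsetP/codomP => [[i _ ->]|[i ->]]; exists i. Qed.

Lemma sorted_Sigma r : sorted <%O (map (val r) (enum 'I_m)).
Proof. by apply: homo_sorted (sorted_enum_ord m) => i j; apply: Sigma_incr. Qed.

Lemma rng_inj : injective (@rng m n).
Proof.
move=> r t eq_rng.
have eq_seq : map (val r) (enum 'I_m) = map (val t) (enum 'I_m).
  apply: (irr_sorted_eq lt_trans ltxx); try exact: sorted_Sigma.
  by move=> x; rewrite -!codomE -!rngE eq_rng.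
apply/val_inj/ffunP => i; have := congr1 (nth (val r i) ^~ i) eq_seq.
by rewrite !(nth_map i) -?enumT ?size_enum_ord ?nth_ord_enum.
Qed.

Lemma sum_rng r (F : 'I_n -> nat) : \sum_(x in rng r) F x = \sum_(j < m) F (val r j).
Proof. by rewrite big_imset // => a b _ _; apply: Sigma_inj. Qed.

Lemma exists_Sigma_rng (A : {set 'I_n}) (x0 : 'I_n) :
  #|A| = m -> exists t : Sigma m n, rng t = A.
Proof.
move=> card_A; pose f := [ffun b : 'I_m => nth x0 (enum A) b].
have f_incr : incrb f.
  apply/forallP => i; apply/forallP => j; apply/implyP => lt_ij; rewrite !ffunE.
  by apply: (sorted_ltn_nth lt_trans x0 (sorted_enum_set A)); rewrite // inE -cardE card_A.
exists (exist _ f f_incr); apply/setP => x; rewrite rngE; apply/codomP/idP => /= [[b ->]|A_x].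
  by rewrite ffunE -mem_enum mem_nth // -cardE card_A.
have lt_xm : index x (enum A) < m by rewrite -card_A cardE index_mem mem_enum.
by exists (Ordinal lt_xm); rewrite ffunE nth_index // mem_enum.
Qed.

End IncreasingMaps.

Section RemovingOnePoint.
Variables k n : nat.
Implicit Types (r : Sigma k n) (i j : 'I_k).

Definition rngD1 r i : {set 'I_n} := rng r :\ val r i.

Definition exchanges r rt (st : 'I_k * 'I_k) : bool :=
  (rng r :&: ~: rng rt == [set val r st.1]) && (~: rng r :&: rng rt == [set val rt st.2]).

Definition set_inversions (c : {set 'I_n}) : nat := \sum_(x in c) \sum_(y in ~: c) (y < x).

Lemma card_rngD1 r i : #|rngD1 r i| = k.-1.
Proof. by have := cardsD1 (val r i) (rng r); rewrite mem_rng card_rng add1n => ->. Qed.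

Lemma size_rstar r : size (rstar r) = n - k.
Proof.
have := cardsC (rng r); rewrite card_rng card_ord cardE /rstar => eq_n.
by rewrite -[in RHS]eq_n addKn.
Qed.

Lemma card_setC_rngD1 r i : #|~: rngD1 r i| = n - k + 1.
Proof.
have := cardsC (rngD1 r i); have := cardsC (rng r).
by rewrite card_rngD1 card_rng card_ord; have := ltn_ord i; lia.
Qed.

Lemma eq_rngD1 r i j : (rngD1 r i == rngD1 r j) = (i == j).
Proof.
apply/eqP/eqP => [eq_ij|-> //]; apply: (@Sigma_inj _ _ r); apply/eqP.
have : val r i \notin rngD1 r j by rewrite -eq_ij !inE eqxx.
by rewrite !inE mem_rng andbT negbK.
Qed.

Lemma rngD1_exchanges r rt i j :
  r != rt -> (rngD1 r i == rngD1 rt j) = exchanges r rt (i, j).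
Proof.
move=> ne_r; rewrite /exchanges /=; apply/eqP/andP => [eq_D|[/eqP r_rt /eqP rt_r]].
  have rng_r : rng r = val r i |: rngD1 r i by rewrite setD1K ?mem_rng.
  have rng_rt : rng rt = val rt j |: rngD1 r i by rewrite eq_D setD1K ?mem_rng.
  have ri_D : val r i \notin rngD1 r i by rewrite !inE eqxx.
  have rtj_D : val rt j \notin rngD1 r i by rewrite eq_D !inE eqxx.
  have ne_ij : val r i != val rt j.
    by apply: contra_neq ne_r => eq_ij; apply: rng_inj; rewrite rng_r rng_rt eq_ij.
  rewrite rng_r rng_rt setU1I_setCU1 // [~: _ :&: _]setIC setU1I_setCU1 1?eq_sym //.
exact: setD1_exchange.
Qed.

Lemma exchanges_uniq r rt st st' : exchanges r rt st -> exchanges r rt st' -> st = st'.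
Proof.
case: st st' => [s t] [s' t'] /andP[/eqP r1 /eqP r2] /andP[/eqP r1' /eqP r2'].
by move: r1' r2'; rewrite r1 r2 => /set1_inj/Sigma_inj /= <- /set1_inj/Sigma_inj /= <-.
Qed.

Lemma sigma_set_inversions r : sigma r = set_inversions (rng r).
Proof.
rewrite /sigma map_cat inversions_cat !inversions_sorted ?add0n.
- rewrite /set_inversions sum_rng !big_map; apply: eq_bigr => j _.
  by rewrite count_map /rstar count_enum_set.
- by rewrite /rstar sorted_map; apply: sorted_enum_set.
- by rewrite sorted_map; apply: sorted_Sigma.
Qed.

Lemma set_inversions_rngD1 r i :
  set_inversions (rngD1 r i) + \sum_(y in ~: rng r) (y < val r i)
  = set_inversions (rng r) + (k - i.+1).
Proof.
have gt_D : \sum_(x in rngD1 r i) (val r i < x) = k - i.+1.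
  rewrite -sum_ord_gt; under [RHS]eq_bigr => j _ do rewrite -(Sigma_ltn r).
  by rewrite -(sum_rng r (fun x => val r i < x)) (big_setD1 _ (mem_rng r i)) ltnn.
set C := \sum_(y in ~: rng r) (y < val r i).
rewrite /set_inversions [in RHS](big_setD1 _ (mem_rng r i)) -/(rngD1 r i).
under eq_bigr => x _ do rewrite (big_setC_setD1 _ _ (mem_rng r i)).
by rewrite big_split gt_D -/C /= addnAC [RHS]addnAC (addnC (k - i.+1)).
Qed.

Lemma sum_setC_rng_ltn r i :
  \sum_(y in ~: rng r) (y < val r i) + count (fun x : 'I_n => val r i < x) (rstar r) = n - k.
Proof.
rewrite -(size_rstar r) /rstar count_enum_set -cardE -big_split /= -sum1_card.
apply: eq_bigr => y y_r; case: ltngtP => //= /val_inj eq_y.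
by move: y_r; rewrite inE eq_y mem_rng.
Qed.

Lemma sigma_count_rstar r i :
  sigma r + count (fun x : 'I_n => val r i < x) (rstar r) + (k - i.+1)
  = set_inversions (rngD1 r i) + (n - k).
Proof.
have := set_inversions_rngD1 r i; have := sum_setC_rng_ltn r i.
by rewrite sigma_set_inversions; lia.
Qed.

End RemovingOnePoint.

Section SortedIncidence.
Variables (n : nat) (l : seq 'I_n) (y : 'I_n).
Variables (t : 'I_(size l).+1 -> 'I_n) (p : 'I_(size l).+1).
Hypotheses (l_sorted : sorted <%O l) (y_l : y \notin l) (t_incr : {homo t : a b / a < b}).
Hypotheses (l_codom : rcons l y =i codom t) (t_p : t p = y).

Lemma sorted_lift_codom : l = map (t \o lift p) (enum 'I_(size l)).
Proof.
have t_inj := inc_inj (le_mono t_incr).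
apply: (irr_sorted_eq lt_trans ltxx) => //.
  by apply: homo_sorted (sorted_enum_ord _) => a b lt_ab; apply/t_incr/lift_incr.
move=> x; apply/idP/mapP => [l_x|[b _ ->]].
  have /codomP[b t_b] : x \in codom t by rewrite -l_codom mem_rcons inE l_x orbT.
  case: (unliftP p b) => [b' eq_b|eq_b]; last by move: y_l; rewrite -t_p -eq_b -t_b l_x.
  by exists b'; rewrite ?mem_enum // t_b eq_b.
have : t (lift p b) \in rcons l y by rewrite l_codom codom_f.
rewrite mem_rcons inE -t_p => /orP[/eqP/t_inj/eqP|//].
by rewrite eq_sym eq_liftF.
Qed.

Lemma count_gt_lift_codom : count (fun x : 'I_n => y < x) l = size l - p.
Proof.
have t_mono : {mono t : a b / a < b} by apply/leW_mono/le_mono.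
rewrite {1}sorted_lift_codom count_map -t_p -(count_enum_ord_ge (ltn_ord p : p <= size l)).
by apply: eq_count => b /=; rewrite t_mono ltn_lift.
Qed.

End SortedIncidence.

Local Open Scope ring_scope.

(* Expanding along the last row moves [y] from the end of [rcons l y] to its
   sorted position, past the [count] elements of [l] larger than [y]. *)
Lemma det_sorted_incidence (R : comNzRingType) m n (l : seq 'I_n) (y : 'I_n)
    (t : 'I_m -> 'I_n) :
  m = (size l).+1 -> sorted <%O l -> y \notin l -> {homo t : a b / (a < b)%N} ->
  rcons l y =i codom t ->
  \det (\matrix_(a < m, b < m) ((t b == nth y (rcons l y) a)%:R : R))
    = (-1) ^+ count (fun x : 'I_n => (y < x)%N) l.
Proof.
move=> m_eq l_sorted y_l t_incr l_codom; subst m.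
have t_inj := inc_inj (le_mono t_incr).
have /codomP[p /esym t_p] : y \in codom t by rewrite -l_codom mem_rcons mem_head.
have l_eq := sorted_lift_codom l_sorted y_l t_incr l_codom t_p.
set M := \matrix_(a, b) _.
have minor_id : row' ord_max (col' p M) = 1%:M.
  apply/matrixP => a b; rewrite !mxE lift_max nth_rcons ltn_ord.
  rewrite {2}l_eq (nth_map a) ?size_enum_ord // nth_ord_enum /=.
  by rewrite (inj_eq t_inj) (inj_eq (@lift_inj _ p)) eq_sym.
rewrite (expand_det_row _ ord_max) (bigD1 p) //= big1 ?addr0 => [|b ne_bp]; last first.
  by rewrite mxE nth_rcons ltnn eqxx -t_p (inj_eq t_inj) (negbTE ne_bp) mul0r.
rewrite mxE nth_rcons ltnn eqxx t_p eqxx mul1r /cofactor minor_id det1 mulr1.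
rewrite (count_gt_lift_codom l_sorted y_l t_incr l_codom t_p).
by rewrite -signr_odd oddD -oddB ?signr_odd // -ltnS.
Qed.

Lemma sum_eq_rng (R : nzRingType) m n (A : {set 'I_n}) (x0 : 'I_n) :
  #|A| = m -> \sum_(t : Sigma m n) ((A == rng t)%:R : R) = 1.
Proof.
move=> /(exists_Sigma_rng x0)[t0 <-]; rewrite (bigD1 t0) //= eqxx big1 ?addr0 // => t ne_t.
by case: eqP => // /rng_inj eq_t; rewrite eq_t eqxx in ne_t.
Qed.

Lemma wedge_dualb_rows (R : fieldType) m n (B : 'M[R]_n) (L : seq 'I_n) (y : 'I_n)
    (t : 'I_m -> 'I_n) :
  B \in unitmx -> size L = m ->
  wedge (map (dualb B) L) (fun b => row (t b) B)
    = \det (\matrix_(a < m, b < m) ((t b == nth y L a)%:R : R)).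
Proof.
move=> B_unit size_L; congr (\det _); apply/matrixP => a b; rewrite !mxE.
by rewrite (nth_map y) ?size_L // /dualb -row_mul mulmxV // !mxE eq_sym.
Qed.

Lemma wedge_rstar_rows (R : fieldType) k n (B : 'M[R]_n) (r : Sigma k n) (i : 'I_k)
    (t : Sigma (n - k + 1) n) :
  B \in unitmx ->
  wedge (map (dualb B) (rcons (rstar r) (val r i))) (fun b => row (val t b) B)
    = if ~: rngD1 r i == rng t then (-1) ^+ count (fun x : 'I_n => (val r i < x)%N) (rstar r)
      else 0.
Proof.
move=> B_unit; rewrite (wedge_dualb_rows (val r i)) ?size_rcons ?size_rstar ?addn1 //.
have mem_L x : (x \in rcons (rstar r) (val r i)) = (x \in ~: rngD1 r i).
  by rewrite mem_rcons inE mem_enum !inE negb_and negbK orbC.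
case: eqP => [D_t|ne_D_t].
  apply: det_sorted_incidence; rewrite ?size_rstar ?addn1 ?mem_enum ?inE ?mem_rng //.
  - exact: sorted_enum_set.
  - exact: Sigma_incr.
  by move=> x; rewrite mem_L D_t rngE.
have /subsetPn[x x_D x_t] : ~~ (~: rngD1 r i \subset rng t).
  apply: contra_notN ne_D_t => sub_D_t.
  by apply/eqP; rewrite eqEcard sub_D_t card_setC_rngD1 card_rng leqnn.
have lt_x : (index x (rcons (rstar r) (val r i)) < n - k + 1)%N.
  by rewrite -(size_rstar r) addn1 -(size_rcons _ (val r i)) index_mem mem_L.
rewrite (expand_det_row _ (Ordinal lt_x)) big1 // => b _.
rewrite mxE nth_index ?mem_L //; case: eqP => [eq_x|_]; last by rewrite mul0r.
by rewrite -eq_x mem_rng in x_t.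
Qed.

Lemma signr_addnn (R : nzRingType) (x : nat) : (-1) ^+ (x + x) = 1 :> R.
Proof. by rewrite -signr_odd addnn odd_double. Qed.

Lemma sign_rngD1 (R : nzRingType) k n (r rt : Sigma k n) (i j : 'I_k) :
  rngD1 r i = rngD1 rt j ->
  (-1) ^+ sigma r * (-1) ^+ count (fun x : 'I_n => (val r i < x)%N) (rstar r)
  * ((-1) ^+ sigma rt * (-1) ^+ count (fun x : 'I_n => (val rt j < x)%N) (rstar rt))
  = (-1) ^+ (i + j) :> R.
Proof.
move=> eq_D; have := sigma_count_rstar r i; have := sigma_count_rstar rt j; rewrite -eq_D.
set c := count _ (rstar r); set c' := count _ (rstar rt).
move: (sigma r) (sigma rt) (set_inversions _) => s s' d par' par.
have parity :
    (s + c + (s' + c') + (k.-1 + k.-1) = i + j + (d + (n - k) + (d + (n - k))))%N.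
  by have := ltn_ord i; have := ltn_ord j; lia.
rewrite -!exprD.
have -> : (-1) ^+ (s + c + (s' + c')) = (-1) ^+ (s + c + (s' + c') + (k.-1 + k.-1)) :> R.
  by rewrite [RHS]exprD signr_addnn mulr1.
by rewrite parity [LHS]exprD signr_addnn mulr1.
Qed.

Definition rngD1_gram (R : nzRingType) k n (p q : Sigma k n * 'I_k) : R :=
  (-1) ^+ (p.2 + q.2) * (rngD1 p.1 p.2 == rngD1 q.1 q.2)%:R.

Definition rstar_wedge (R : fieldType) k n (B : 'M[R]_n) (r : Sigma k n) (i : 'I_k) :
    altform R n (n - k + 1) :=
  wedge (map (dualb B) (rcons (rstar r) (val r i))).

Lemma rstar_wedge_gram (R : fieldType) k n (B : 'M[R]_n) (p q : Sigma k n * 'I_k) :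
  B \in unitmx ->
  \sum_(t : Sigma (n - k + 1) n)
      ((-1) ^+ sigma p.1 * rstar_wedge B p.1 p.2 (fun b => row (val t b) B))
    * ((-1) ^+ sigma q.1 * rstar_wedge B q.1 q.2 (fun b => row (val t b) B))
  = rngD1_gram R p q.
Proof.
case: p q => [r i] [rt j] B_unit; rewrite /rngD1_gram /rstar_wedge /=.
under eq_bigr => t _ do rewrite !wedge_rstar_rows //.
have [eq_D|ne_D] := eqVneq (rngD1 r i) (rngD1 rt j).
  transitivity
    (\sum_(t : Sigma (n - k + 1) n) (-1) ^+ (i + j) * ((~: rngD1 r i == rng t)%:R : R)).
    apply: eq_bigr => t _; rewrite -eq_D; case: eqP => _; last by rewrite !(mulr0, mul0r).
    by rewrite !mulr1 -(sign_rngD1 R eq_D).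
  by rewrite -mulr_sumr (sum_eq_rng _ (val r i)) ?card_setC_rngD1 // eq_D eqxx.
rewrite mulr0 big1 // => t _; case: eqP => [D_t|_]; last by rewrite !(mulr0, mul0r).
case: eqP => [D'_t|_]; last by rewrite !(mulr0, mul0r).
by case/eqP: ne_D; apply: setC_inj; rewrite D_t D'_t.
Qed.

Lemma altdot_self_ge0 (R : realDomainType) n m (B : 'M[R]_n) (w : altform R n m) :
  0 <= altdot B w w.
Proof. by apply: sumr_ge0 => t _; rewrite -expr2 sqr_ge0. Qed.

Lemma lamstar_mul (R : comNzRingType) k n (lam : 'I_n -> R) (r : Sigma k n) (i : 'I_k) :
  lamstar lam r * lam (val r i) = lamS lam (~: rngD1 r i).
Proof. by rewrite /lamS big_setC_setD1 ?mem_rng // mulrC. Qed.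

Lemma lamstar_ge0 (R : numDomainType) k n (lam : 'I_n -> R) (r : Sigma k n) :
  (forall j, 0 <= lam j) -> 0 <= lamstar lam r.
Proof. by move=> lam_ge0; apply: prodr_ge0. Qed.

Section QuadraticForm.
Variables (R : rcfType) (k n : nat) (a : Sigma k n -> R) (lam0 : R) (lam : 'I_n -> R).
Hypothesis lam_ge0 : forall j, 0 <= lam j.
Implicit Types (r rt : Sigma k n) (i j : 'I_k) (p q : Sigma k n * 'I_k).

Definition theta_coef (p : Sigma k n * 'I_k) : R :=
  a p.1 * Num.sqrt (lamstar lam p.1 * lam (val p.1 p.2)).

Lemma theta_rows (B : 'M[R]_n) (t : Sigma (n - k + 1) n) :
  theta B lam a (fun b => row (val t b) B)
  = \sum_p theta_coef p
        * ((-1) ^+ sigma p.1 * rstar_wedge B p.1 p.2 (fun b => row (val t b) B)).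
Proof.
rewrite /theta; under eq_bigr => r _ do rewrite mulr_sumr.
rewrite pair_bigA; apply: eq_bigr => -[r i] _.
by rewrite [RHS]mulrCA -mulrA; congr (_ * _); rewrite /theta_coef -mulrA.
Qed.

Lemma altdot_theta (B : 'M[R]_n) : B \in unitmx ->
  altdot B (theta B lam a) (theta B lam a)
  = \sum_p \sum_q theta_coef p * theta_coef q * rngD1_gram R p q.
Proof.
move=> B_unit; rewrite /altdot.
under eq_bigr => t _ do rewrite theta_rows mulr_suml.
under eq_bigr => t _ do under eq_bigr => p _ do rewrite mulr_sumr.
rewrite exchange_big; apply: eq_bigr => p _; rewrite exchange_big; apply: eq_bigr => q _.
by rewrite -(rstar_wedge_gram p q B_unit) mulr_sumr; apply: eq_bigr => t _; rewrite mulrACA.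
Qed.

Lemma sqrt_lamstar_mul r rt i j : rngD1 r i = rngD1 rt j ->
  Num.sqrt (lamstar lam r * lam (val r i)) * Num.sqrt (lamstar lam rt * lam (val rt j))
  = lamstar lam r * lam (val r i).
Proof.
by move=> eq_D; rewrite !lamstar_mul eq_D -expr2 sqr_sqrtr //; apply: prodr_ge0.
Qed.

Lemma mentry_diag r :
  a r * a r * mentry lam0 lam r r
  = lam0 * (a r ^+ 2 * lamstar lam r)
    + \sum_i \sum_j theta_coef (r, i) * theta_coef (r, j) * rngD1_gram R (r, i) (r, j).
Proof.
have diag i : \sum_j theta_coef (r, i) * theta_coef (r, j) * rngD1_gram R (r, i) (r, j)
    = a r ^+ 2 * (lamstar lam r * lam (val r i)).
  rewrite (bigD1 i) //= big1 ?addr0 => [|j ne_ji]; last first.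
    by rewrite /rngD1_gram /= eq_rngD1 eq_sym (negbTE ne_ji) !mulr0.
  by rewrite /theta_coef /rngD1_gram /= eqxx signr_addnn !mulr1 mulrACA sqrt_lamstar_mul.
rewrite /mentry eqxx (eq_bigr _ (fun i _ => diag i)) -!mulr_sumr; ring.
Qed.

Lemma mentry_offdiag r rt : r != rt ->
  a r * a rt * mentry lam0 lam r rt
  = \sum_i \sum_j theta_coef (r, i) * theta_coef (rt, j) * rngD1_gram R (r, i) (rt, j).
Proof.
move=> ne_r; rewrite /mentry (negbTE ne_r) pair_bigA /=.
have gram_exchanges st :
    rngD1_gram R (r, st.1) (rt, st.2) = (-1) ^+ (st.1 + st.2) * (exchanges r rt st)%:R.
  by case: st => s t; rewrite /rngD1_gram /= rngD1_exchanges.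
under eq_bigr => st _ do rewrite gram_exchanges.
case: pickP => [st ex_st|no_ex]; last first.
  by rewrite mulr0 big1 // => st _; rewrite (no_ex st : exchanges r rt st = false) !mulr0.
have {}ex_st : exchanges r rt st := ex_st.
rewrite (bigD1 st) //= big1 ?addr0 => [|st' ne_st]; last first.
  suff -> : exchanges r rt st' = false by rewrite !mulr0.
  by apply: contraNF ne_st => ex_st'; rewrite (exchanges_uniq ex_st' ex_st).
have eq_D : rngD1 r st.1 = rngD1 rt st.2.
  by apply/eqP; rewrite rngD1_exchanges //; case: st ex_st.
rewrite ex_st mulr1 /theta_coef.
rewrite -[(r, _).1]/r -[(rt, _).1]/rt -[(r, _).2]/st.1 -[(rt, _).2]/st.2.
by rewrite [in RHS]mulrACA sqrt_lamstar_mul //; ring.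
Qed.

Lemma mentry_row r :
  \sum_rt a r * a rt * mentry lam0 lam r rt
  = lam0 * (a r ^+ 2 * lamstar lam r)
    + \sum_rt \sum_i \sum_j
        theta_coef (r, i) * theta_coef (rt, j) * rngD1_gram R (r, i) (rt, j).
Proof.
rewrite (bigD1 r) //= [in RHS](bigD1 r) //= mentry_diag addrA; congr (_ + _).
by apply: eq_bigr => rt ne_rt; rewrite mentry_offdiag // eq_sym.
Qed.

Lemma mentry_quadratic_form :
  \sum_r \sum_rt a r * a rt * mentry lam0 lam r rt
  = lam0 * \sum_r a r ^+ 2 * lamstar lam r
    + \sum_p \sum_q theta_coef p * theta_coef q * rngD1_gram R p q.
Proof.
rewrite (eq_bigr _ (fun r _ => mentry_row r)) big_split /= -mulr_sumr; congr (_ + _).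
under eq_bigr => r _ do rewrite exchange_big /=.
under eq_bigr => r _ do under eq_bigr => i _ do rewrite pair_bigA /=.
by rewrite pair_bigA; apply: eq_bigr => -[r i] _; apply: eq_bigr => -[rt j] _.
Qed.

End QuadraticForm.

Theorem lemma3p7 (R : rcfType) (n k : nat) (hk1 : (1 <= k)%N) (hkn : (k <= n)%N)
  (a : Sigma k n -> R) (lam0 : R) (lam : 'I_n -> R)
  (hlam0 : 0 <= lam0) (hlam : forall i, 0 <= lam i)
  (B : 'M[R]_n) (hB : B *m B^T = 1%:M) :
  \sum_(r : Sigma k n) \sum_(rt : Sigma k n) a r * a rt * mentry lam0 lam r rt
    = lam0 * \sum_(r : Sigma k n) a r ^+ 2 * lamstar lam r
      + altdot B (theta B lam a) (theta B lam a)
  /\ 0 <= \sum_(r : Sigma k n) \sum_(rt : Sigma k n) a r * a rt * mentry lam0 lam r rt.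
Proof.
have B_unit : B \in unitmx := (mulmx1_unit hB).1.
have identity : \sum_r \sum_rt a r * a rt * mentry lam0 lam r rt
    = lam0 * \sum_r a r ^+ 2 * lamstar lam r + altdot B (theta B lam a) (theta B lam a).
  by rewrite mentry_quadratic_form // altdot_theta.
split=> //; rewrite identity addr_ge0 ?altdot_self_ge0 // mulr_ge0 // sumr_ge0 // => r _.
by rewrite mulr_ge0 ?sqr_ge0 ?lamstar_ge0.
Qed.
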